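(* (i) For $s=\sigma+i\tau$ with any fixed real $\sigma\notin\{1-s_i:i\ge0\}$, there is $c=c(\sigma)>0$ with $|\psi(1-s)-\psi(1)|\ge c$ for all $\tau\in\mathbb{R}$. (ii) For any compact $K\subset\mathbb{R}$ there is $c>0$ with $|\psi(1-s)-\psi(1)|\ge c$ for all $s=\sigma+i\tau$ with $\sigma\in K$ and $|\tau|\ge1$.
   Context: $\psi$ is the digamma function; $s_0=1>s_1>s_2>\cdots$ are the (real) roots of $\psi(s)=\psi(1)$, with $s_i\in(-i,-(i-1))$ for $i\ge1$. *)

From Stdlib Require Import Reals.
From Coquelicot Require Import Coquelicot.
Open Scope R_scope.

Definition euler_gamma : R :=
  real (Lim_seq (fun n => sum_f_R0 (fun k => / INR (S k)) n - ln (INR (S n)))).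

(* n-th term of the standard series psi(z) = -gamma + sum_{n>=0} (1/(n+1) - 1/(n+z)). *)
Definition psi_term (z : C) (n : nat) : C :=
  (/ RtoC (INR (S n)) - / (RtoC (INR n) + z))%C.

(* The digamma function on C (meaningful away from the poles 0,-1,-2,...);
   the complex series is summed componentwise. *)
Definition digamma (z : C) : C :=
  (RtoC (- euler_gamma)
   + (Series (fun n => Re (psi_term z n)), Series (fun n => Im (psi_term z n))))%C.

Definition is_pole (z : C) : Prop := exists k : nat, z = RtoC (- INR k).

(* s is a real root of psi(s) = psi(1), i.e. one of the s_i. *)
Definition psi1_root (s : R) : Prop :=
  ~ is_pole (RtoC s) /\ digamma (RtoC s) = digamma (RtoC 1).

(* Write 1 - s = a + i t.  The imaginary part of psi(a + i t) - psi(1) is t * sum_n 1 / ((n + a)^2 + t^2);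
   for |t| >= 1 and |a| <= A, each of the first floor |t| + 1 terms is at least 1 / (((1 + A)^2 + 1) t^2),
   which bounds it below uniformly.  This gives (ii), and (i) for |t| bounded away from 0, where a
   single term suffices.  Near the real axis, either a = -k is a pole and the k-th term alone
   gives 1 / |t| >= 1, or Re psi(a + i t) differs from psi(a) by O(t^2) while
   psi(a) <> psi(1) because a = 1 - sigma is not a root. *)
From Stdlib Require Import Reals Lra Lia Classical.
From Coquelicot Require Import Coquelicot.
Open Scope R_scope.

Lemma sum_inv_consecutive_diff n :
  sum_f_R0 (fun k => / (INR k + 1) - / (INR k + 2)) n = 1 - / (INR n + 2).
Proof.
  induction n as [|n IH].
  - cbn [sum_f_R0]. change (INR 0) with 0. rewrite !Rplus_0_l. field.
  - rewrite tech5, IH, S_INR. assert (0 <= INR n) by apply pos_INR. field. lra.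
Qed.

Lemma ex_series_inv_consecutive_diff :
  ex_series (fun k => / (INR k + 1) - / (INR k + 2)).
Proof.
  exists 1. change (is_lim_seq (sum_n (fun k => / (INR k + 1) - / (INR k + 2))) 1).
  apply (is_lim_seq_ext (fun n => 1 - / (INR n + 2))).
  { intros n. rewrite sum_n_Reals, sum_inv_consecutive_diff. reflexivity. }
  assert (Hinv : is_lim_seq (fun n => / (INR n + 2)) 0).
  { change (Finite 0) with (Rbar_inv p_infty).
    apply is_lim_seq_inv; [| discriminate].
    eapply is_lim_seq_plus; [apply is_lim_seq_INR | apply is_lim_seq_const | reflexivity]. }
  pose proof (is_lim_seq_minus' _ _ 1 0 (is_lim_seq_const 1) Hinv) as Hlim.
  rewrite Rminus_0_r in Hlim. exact Hlim.
Qed.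

(* Comparison with the telescoping series, since [2 / ((k+1)(k+2)) >= 1 / (k+1)^2]. *)
Lemma ex_series_eventually_le_inv_sq (f : nat -> R) (M : R) (N : nat) :
  (forall n, (N <= n)%nat -> Rabs (f n) <= M / (INR n + 1) ^ 2) -> ex_series f.
Proof.
  intros Hf.
  assert (HM : 0 <= M).
  { specialize (Hf N (le_n N)). pose proof (Rabs_pos (f N)). pose proof (pos_INR N).
    apply (Rmult_le_compat_r ((INR N + 1) ^ 2)) in Hf; [| nra].
    unfold Rdiv in Hf. rewrite Rmult_assoc, Rinv_l in Hf; nra. }
  apply (ex_series_incr_n f N).
  apply (@ex_series_le R_AbsRing R_CompleteNormedModule _
           (fun k => (/ (INR k + 1) - / (INR k + 2)) * (2 * M))).
  2: { apply ex_series_scal_r, ex_series_inv_consecutive_diff. }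
  intros k. change (norm (f (N + k)%nat)) with (Rabs (f (N + k)%nat)).
  eapply Rle_trans; [apply Hf; lia |].
  assert (Hk : 0 <= INR k) by apply pos_INR.
  assert (HNk : INR k <= INR (N + k)) by (apply le_INR; lia).
  replace ((/ (INR k + 1) - / (INR k + 2)) * (2 * M))
    with (M / ((INR k + 1) * (INR k + 2) / 2)) by (field; lra).
  unfold Rdiv. apply Rmult_le_compat_l; [exact HM |].
  apply Rinv_le_contravar; nra.
Qed.

Lemma eventually_half_succ_le_shift (a : R) :
  exists N : nat, forall n, (N <= n)%nat -> (INR n + 1) / 2 <= INR n + a.
Proof.
  assert (Hx : 0 <= 2 * Rabs a + 1) by (pose proof (Rabs_pos a); lra).
  destruct (nfloor_ex _ Hx) as [N [_ HN]].
  exists (S N). intros n Hn.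
  apply le_INR in Hn. rewrite S_INR in Hn.
  pose proof (Rle_abs (- a)) as Ha. rewrite Rabs_Ropp in Ha. lra.
Qed.

Lemma Series_nonneg (f : nat -> R) :
  (forall n, 0 <= f n) -> ex_series f -> 0 <= Series f.
Proof.
  intros Hf Hex.
  replace 0 with (Series (fun _ => 0 * 0)).
  - apply Series_le; [intros n; pose proof (Hf n); split; lra | exact Hex].
  - rewrite Series_scal_l. ring.
Qed.

Lemma sum_f_R0_le_Series (f : nat -> R) N :
  (forall n, 0 <= f n) -> ex_series f -> sum_f_R0 f N <= Series f.
Proof.
  intros Hf Hex.
  rewrite (Series_incr_n f (S N)) by (lia || exact Hex). simpl pred.
  assert (0 <= Series (fun k => f (S N + k)%nat)).
  { apply Series_nonneg; [intros; apply Hf | apply (ex_series_incr_n f (S N)), Hex]. }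
  lra.
Qed.

Lemma term_le_Series (f : nat -> R) k :
  (forall n, 0 <= f n) -> ex_series f -> f k <= Series f.
Proof.
  intros Hf Hex. eapply Rle_trans; [| apply (sum_f_R0_le_Series f k Hf Hex)].
  destruct k as [|k]; simpl; [lra |].
  pose proof (cond_pos_sum f k Hf). lra.
Qed.

Lemma sum_f_R0_ge_const (f : nat -> R) N c :
  (forall k, (k <= N)%nat -> c <= f k) -> (INR N + 1) * c <= sum_f_R0 f N.
Proof.
  induction N as [|N IH]; intros Hc; simpl sum_f_R0.
  - specialize (Hc 0%nat (le_n 0)). simpl. lra.
  - rewrite S_INR.
    assert (c <= f (S N)) by (apply Hc; lia).
    assert ((INR N + 1) * c <= sum_f_R0 f N) by (apply IH; intros; apply Hc; lia).
    lra.
Qed.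

Lemma Series_dist_le (f g e : nat -> R) :
  ex_series f -> ex_series e -> (forall n, Rabs (g n - f n) <= e n) ->
  Rabs (Series g - Series f) <= Series e.
Proof.
  intros Hf He Hgf.
  assert (Hd : ex_series (fun n => g n - f n)).
  { apply (@ex_series_le R_AbsRing R_CompleteNormedModule _ e); [exact Hgf | exact He]. }
  assert (Hg : ex_series g).
  { apply (ex_series_ext (fun n => plus (g n - f n) (f n))).
    - intros n. unfold plus. simpl. ring.
    - apply (ex_series_plus _ _ Hd Hf). }
  rewrite <- Series_minus by assumption.
  eapply Rle_trans; [apply Series_Rabs |].
  - apply (@ex_series_le R_AbsRing R_CompleteNormedModule _ e); [| exact He].
    intros n. change (norm (Rabs (g n - f n))) with (Rabs (Rabs (g n - f n))).
    rewrite Rabs_Rabsolu. apply Hgf.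
  - apply Series_le; [intros n; split; [apply Rabs_pos | apply Hgf] | exact He].
Qed.

Lemma im_le_Cmod (z : C) : Rabs (Im z) <= Cmod z.
Proof.
  destruct z as [x y]. unfold Cmod, Im; simpl. rewrite <- sqrt_Rsqr_abs.
  apply sqrt_le_1_alt. unfold Rsqr. nra.
Qed.

Definition psi_re_term (a t : R) (n : nat) : R :=
  / (INR n + 1) - (INR n + a) / ((INR n + a) ^ 2 + t ^ 2).

Definition psi_im_weight (a t : R) (n : nat) : R := / ((INR n + a) ^ 2 + t ^ 2).

Definition inv_cube_dist (a : R) (n : nat) : R := / Rabs (INR n + a) ^ 3.

Lemma Re_psi_term a t n : Re (psi_term (a, t) n) = psi_re_term a t n.
Proof.
  unfold psi_term, psi_re_term, Cminus, Cplus, Copp, Cinv, RtoC, Re, Im; cbn [fst snd].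
  rewrite S_INR, Rplus_0_l. assert (0 <= INR n) by apply pos_INR.
  unfold Rminus. f_equal. field. lra.
Qed.

Lemma Im_psi_term a t n : Im (psi_term (a, t) n) = t * psi_im_weight a t n.
Proof.
  unfold psi_term, psi_im_weight, Cminus, Cplus, Copp, Cinv, RtoC, Re, Im; cbn [fst snd].
  rewrite Rplus_0_l. unfold Rdiv. change RinvImpl.Rinv with Rinv. ring.
Qed.

Lemma digamma_components a t :
  digamma (a, t) = (- euler_gamma + Series (psi_re_term a t), t * Series (psi_im_weight a t)).
Proof.
  unfold digamma.
  rewrite (Series_ext _ (psi_re_term a t)) by (intros; apply Re_psi_term).
  rewrite (Series_ext (fun n => Im (psi_term (a, t) n)) (fun n => t * psi_im_weight a t n))
    by (intros; apply Im_psi_term).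
  rewrite Series_scal_l. unfold Cplus, RtoC. simpl. f_equal. ring.
Qed.

Lemma psi_im_weight_nonneg a t n : 0 <= psi_im_weight a t n.
Proof.
  unfold psi_im_weight.
  destruct (Req_dec ((INR n + a) ^ 2 + t ^ 2) 0) as [-> | Hne].
  - rewrite Rinv_0. lra.
  - left. apply Rinv_0_lt_compat.
    pose proof (pow2_ge_0 (INR n + a)). pose proof (pow2_ge_0 t). lra.
Qed.

Lemma ex_series_psi_im_weight a t : ex_series (psi_im_weight a t).
Proof.
  destruct (eventually_half_succ_le_shift a) as [N HN].
  apply (ex_series_eventually_le_inv_sq _ 4 N).
  intros n Hn. specialize (HN n Hn). pose proof (pos_INR n).
  rewrite Rabs_pos_eq by apply psi_im_weight_nonneg. unfold psi_im_weight.
  replace (4 / (INR n + 1) ^ 2) with (/ (((INR n + 1) / 2) ^ 2)) by (field; lra).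
  apply Rinv_le_contravar; nra.
Qed.

Lemma digamma_dist_ge_Im a t :
  Rabs t * Series (psi_im_weight a t) <= Cmod (digamma (a, t) - digamma (RtoC 1))%C.
Proof.
  eapply Rle_trans; [| apply im_le_Cmod].
  change (RtoC 1) with (1, 0). rewrite !digamma_components. simpl.
  replace (t * Series (psi_im_weight a t) + - (0 * Series (psi_im_weight 1 0)))
    with (t * Series (psi_im_weight a t)) by ring.
  rewrite Rabs_mult, (Rabs_pos_eq (Series _)); [lra |].
  apply Series_nonneg; [apply psi_im_weight_nonneg | apply ex_series_psi_im_weight].
Qed.

Lemma digamma_dist_ge_Re a t :
  Rabs (Series (psi_re_term a t) - Series (psi_re_term 1 0))
  <= Cmod (digamma (a, t) - digamma (RtoC 1))%C.
Proof.
  eapply Rle_trans; [| apply re_le_Cmod].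
  change (RtoC 1) with (1, 0). rewrite !digamma_components. simpl.
  replace (- euler_gamma + Series (psi_re_term a t) + - (- euler_gamma + Series (psi_re_term 1 0)))
    with (Series (psi_re_term a t) - Series (psi_re_term 1 0)) by ring.
  lra.
Qed.

Lemma Series_psi_im_weight_ge_far a A t :
  Rabs a <= A -> 1 <= Rabs t -> / ((1 + A) ^ 2 + 1) <= Rabs t * Series (psi_im_weight a t).
Proof.
  intros Ha Ht.
  set (T := Rabs t) in *. assert (HT0 : 0 <= T) by apply Rabs_pos.
  assert (HA : 0 <= A) by (pose proof (Rabs_pos a); lra).
  destruct (nfloor_ex T HT0) as [N [HN1 HN2]].
  set (B := (1 + A) ^ 2 + 1). assert (HB : 1 <= B) by (unfold B; nra).
  assert (Ht2 : t ^ 2 = T ^ 2) by (unfold T; rewrite <- !Rsqr_pow2; apply Rsqr_abs).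
  assert (Hterm : forall k, (k <= N)%nat -> / (B * T ^ 2) <= psi_im_weight a t k).
  { intros k Hk. apply le_INR in Hk. pose proof (pos_INR k).
    assert (Hu : Rabs (INR k + a) <= (1 + A) * T).
    { eapply Rle_trans; [apply Rabs_triang |]. rewrite Rabs_pos_eq by lra. nra. }
    assert (Hu2 : (INR k + a) ^ 2 <= ((1 + A) * T) ^ 2).
    { rewrite <- !Rsqr_pow2, Rsqr_abs. apply Rsqr_incr_1; [exact Hu | apply Rabs_pos | nra]. }
    unfold psi_im_weight. apply Rinv_le_contravar.
    - pose proof (pow2_ge_0 (INR k + a)). nra.
    - unfold B. rewrite Ht2. nra. }
  pose proof (sum_f_R0_ge_const _ _ _ Hterm) as Hsum.
  pose proof (sum_f_R0_le_Series (psi_im_weight a t) N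
                (psi_im_weight_nonneg a t) (ex_series_psi_im_weight a t)) as Hser.
  replace (/ B) with (T * (T * / (B * T ^ 2))) by (field; lra).
  apply Rmult_le_compat_l; [lra |].
  assert (0 <= / (B * T ^ 2)) by (left; apply Rinv_0_lt_compat; nra).
  nra.
Qed.

Lemma Series_psi_im_weight_ge_away a delta : 0 < delta ->
  exists c, 0 < c /\ forall t, delta <= Rabs t -> c <= Rabs t * Series (psi_im_weight a t).
Proof.
  intros Hd.
  set (c1 := / ((1 + Rabs a) ^ 2 + 1)).
  assert (Hc1 : 0 < c1) by (apply Rinv_0_lt_compat; pose proof (Rabs_pos a); nra).
  assert (Ha2 : 0 < a ^ 2 + 1) by (pose proof (pow2_ge_0 a); lra).
  exists (Rmin c1 (delta / (a ^ 2 + 1))). split.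
  { apply Rmin_pos; [exact Hc1 | apply Rdiv_lt_0_compat; lra]. }
  intros t Ht.
  destruct (Rle_lt_dec 1 (Rabs t)) as [Hbig | Hsmall].
  - eapply Rle_trans; [apply Rmin_l |]. apply Series_psi_im_weight_ge_far; lra.
  - eapply Rle_trans; [apply Rmin_r |].
    pose proof (term_le_Series _ 0 (psi_im_weight_nonneg a t) (ex_series_psi_im_weight a t)) as H0.
    unfold psi_im_weight at 1 in H0. change (INR 0) with 0 in H0. rewrite Rplus_0_l in H0.
    assert (Ht2 : 0 < t ^ 2 <= 1).
    { rewrite <- Rsqr_pow2, Rsqr_abs. unfold Rsqr. pose proof (Rabs_pos t). nra. }
    assert (/ (a ^ 2 + 1) <= / (a ^ 2 + t ^ 2)).
    { apply Rinv_le_contravar; pose proof (pow2_ge_0 a); lra. }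
    unfold Rdiv. apply Rmult_le_compat; try lra.
    left. apply Rinv_0_lt_compat. exact Ha2.
Qed.

Lemma Series_psi_im_weight_ge_at_pole (k : nat) t : t <> 0 ->
  / Rabs t <= Rabs t * Series (psi_im_weight (- INR k) t).
Proof.
  intros Ht. assert (HT : 0 < Rabs t) by (apply Rabs_pos_lt; exact Ht).
  pose proof (term_le_Series _ k (psi_im_weight_nonneg (- INR k) t)
                (ex_series_psi_im_weight (- INR k) t)) as Hk.
  unfold psi_im_weight at 1 in Hk.
  replace ((INR k + - INR k) ^ 2 + t ^ 2) with (Rabs t ^ 2) in Hk
    by (rewrite <- !Rsqr_pow2, <- Rsqr_abs; unfold Rsqr; ring).
  replace (/ Rabs t) with (Rabs t * / Rabs t ^ 2) by (field; lra).
  apply Rmult_le_compat_l; lra.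
Qed.

Lemma inv_cube_dist_nonneg a n : 0 <= inv_cube_dist a n.
Proof.
  unfold inv_cube_dist. pose proof (Rabs_pos (INR n + a)).
  destruct (Req_dec (Rabs (INR n + a)) 0) as [-> | Hne].
  - rewrite pow_i, Rinv_0 by lia. lra.
  - left. apply Rinv_0_lt_compat, pow_lt. lra.
Qed.

Lemma ex_series_inv_cube_dist a : ex_series (inv_cube_dist a).
Proof.
  destruct (eventually_half_succ_le_shift a) as [N HN].
  apply (ex_series_eventually_le_inv_sq _ 8 N).
  intros n Hn. specialize (HN n Hn). pose proof (pos_INR n).
  rewrite Rabs_pos_eq by apply inv_cube_dist_nonneg. unfold inv_cube_dist.
  rewrite (Rabs_pos_eq (INR n + a)) by lra.
  replace (8 / (INR n + 1) ^ 2) with (/ ((INR n + 1) ^ 2 / 8)) by (field; lra).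
  assert (((INR n + 1) / 2) ^ 3 <= (INR n + a) ^ 3) by (apply pow_incr; lra).
  apply Rinv_le_contravar; nra.
Qed.

Lemma ex_series_psi_re_term_axis a : ex_series (psi_re_term a 0).
Proof.
  destruct (eventually_half_succ_le_shift a) as [N HN].
  apply (ex_series_eventually_le_inv_sq _ (2 * Rabs (a - 1)) N).
  intros n Hn. specialize (HN n Hn). pose proof (pos_INR n).
  unfold psi_re_term.
  replace (/ (INR n + 1) - (INR n + a) / ((INR n + a) ^ 2 + 0 ^ 2))
    with ((a - 1) * / ((INR n + 1) * (INR n + a))) by (field; lra).
  rewrite Rabs_mult, (Rabs_pos_eq (/ _)) by (left; apply Rinv_0_lt_compat; nra).
  replace (2 * Rabs (a - 1) / (INR n + 1) ^ 2)
    with (Rabs (a - 1) * / ((INR n + 1) * (INR n + 1) / 2)) by (field; lra).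
  apply Rmult_le_compat_l; [apply Rabs_pos |].
  apply Rinv_le_contravar; nra.
Qed.

Lemma psi_re_term_dist_axis_le a t n : INR n + a <> 0 ->
  Rabs (psi_re_term a t n - psi_re_term a 0 n) <= t ^ 2 * inv_cube_dist a n.
Proof.
  intros Hu. unfold psi_re_term, inv_cube_dist. set (u := INR n + a) in *.
  assert (Hu2 : 0 < u ^ 2) by (rewrite <- Rsqr_pow2; apply Rsqr_pos_lt, Hu).
  assert (Ht2 : 0 <= t ^ 2) by apply pow2_ge_0.
  assert (HU : 0 < Rabs u) by (apply Rabs_pos_lt, Hu).
  replace (/ (INR n + 1) - u / (u ^ 2 + t ^ 2) - (/ (INR n + 1) - u / (u ^ 2 + 0 ^ 2)))
    with (t ^ 2 * / (u * (u ^ 2 + t ^ 2))) by (pose proof (pos_INR n); field; lra).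
  rewrite Rabs_mult, Rabs_inv, Rabs_mult, (Rabs_pos_eq (t ^ 2)), (Rabs_pos_eq (u ^ 2 + t ^ 2)) by lra.
  apply Rmult_le_compat_l; [lra |].
  rewrite <- Rsqr_pow2, Rsqr_abs, Rsqr_pow2 in *.
  apply Rinv_le_contravar; [apply pow_lt, HU | nra].
Qed.

Lemma Series_psi_re_term_near_axis a : (forall n, INR n + a <> 0) ->
  forall e, 0 < e -> exists delta, 0 < delta /\ forall t, Rabs t < delta ->
    Rabs (Series (psi_re_term a t) - Series (psi_re_term a 0)) <= e.
Proof.
  intros Ha e He.
  set (C := Series (inv_cube_dist a)).
  assert (HC : 0 <= C) by (apply Series_nonneg; [apply inv_cube_dist_nonneg | apply ex_series_inv_cube_dist]).
  exists (Rmin 1 (e / (C + 1))). split.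
  { apply Rmin_pos; [lra | apply Rdiv_lt_0_compat; lra]. }
  intros t Ht.
  assert (Ht1 : Rabs t < 1) by (eapply Rlt_le_trans; [exact Ht | apply Rmin_l]).
  assert (Hte : Rabs t < e / (C + 1)) by (eapply Rlt_le_trans; [exact Ht | apply Rmin_r]).
  assert (Ht2 : t ^ 2 * (C + 1) <= e).
  { rewrite <- Rsqr_pow2, Rsqr_abs. unfold Rsqr. pose proof (Rabs_pos t).
    apply (Rmult_lt_compat_r (C + 1)) in Hte; [| lra].
    unfold Rdiv in Hte. rewrite Rmult_assoc, Rinv_l in Hte by lra. nra. }
  eapply Rle_trans.
  - apply (Series_dist_le _ _ (fun n => t ^ 2 * inv_cube_dist a n)).
    + apply ex_series_psi_re_term_axis.
    + apply (@ex_series_scal_l R_AbsRing R_NormedModule), ex_series_inv_cube_dist.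
    + intros n. apply psi_re_term_dist_axis_le, Ha.
  - rewrite Series_scal_l. fold C. pose proof (pow2_ge_0 t). nra.
Qed.

Lemma digamma_dist_vertical_line_at_pole (k : nat) :
  exists c, 0 < c /\ forall t, ~ is_pole ((- INR k)%R, t) ->
    c <= Cmod (digamma ((- INR k)%R, t) - digamma (RtoC 1))%C.
Proof.
  destruct (Series_psi_im_weight_ge_away (- INR k) 1 Rlt_0_1) as [c [Hc Hfar]].
  exists (Rmin c 1). split; [apply Rmin_pos; lra |].
  intros t Hpole. eapply Rle_trans; [| apply digamma_dist_ge_Im].
  destruct (Rle_lt_dec 1 (Rabs t)) as [Hbig | Hsmall].
  - eapply Rle_trans; [apply Rmin_l | apply Hfar, Hbig].
  - assert (Ht : t <> 0) by (intros ->; apply Hpole; exists k; reflexivity).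
    assert (1 <= / Rabs t).
    { rewrite <- Rinv_1. apply Rinv_le_contravar; [apply Rabs_pos_lt, Ht | lra]. }
    pose proof (Series_psi_im_weight_ge_at_pole k t Ht).
    pose proof (Rmin_r c 1). lra.
Qed.

Lemma digamma_dist_vertical_line_off_pole (a : R) :
  (forall n, INR n + a <> 0) -> digamma (RtoC a) <> digamma (RtoC 1) ->
  exists c, 0 < c /\ forall t, c <= Cmod (digamma (a, t) - digamma (RtoC 1))%C.
Proof.
  intros Ha Hneq.
  set (d := Rabs (Series (psi_re_term a 0) - Series (psi_re_term 1 0))).
  assert (Hd : 0 < d).
  { apply Rabs_pos_lt. intros Heq. apply Hneq.
    change (RtoC a) with (a, 0). change (RtoC 1) with (1, 0).
    rewrite !digamma_components. f_equal; [lra | ring]. }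
  destruct (Series_psi_re_term_near_axis a Ha (d / 2)) as [delta [Hdelta Hnear]]; [lra |].
  destruct (Series_psi_im_weight_ge_away a delta Hdelta) as [c [Hc Hfar]].
  exists (Rmin c (d / 2)). split; [apply Rmin_pos; lra |].
  intros t. destruct (Rle_lt_dec delta (Rabs t)) as [Hbig | Hsmall].
  - eapply Rle_trans; [apply Rmin_l |].
    eapply Rle_trans; [apply Hfar, Hbig | apply digamma_dist_ge_Im].
  - eapply Rle_trans; [apply Rmin_r |].
    eapply Rle_trans; [| apply digamma_dist_ge_Re].
    specialize (Hnear t Hsmall).
    pose proof (Rabs_triang_inv (Series (psi_re_term a 0) - Series (psi_re_term 1 0))
                  (Series (psi_re_term a 0) - Series (psi_re_term a t))) as Htri.
    rewrite <- Rabs_Ropp in Hnear. unfold d in *.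
    replace (Series (psi_re_term a 0) - Series (psi_re_term 1 0)
             - (Series (psi_re_term a 0) - Series (psi_re_term a t)))
      with (Series (psi_re_term a t) - Series (psi_re_term 1 0)) in Htri by ring.
    replace (- (Series (psi_re_term a t) - Series (psi_re_term a 0)))
      with (Series (psi_re_term a 0) - Series (psi_re_term a t)) in Hnear by ring.
    lra.
Qed.

Lemma digamma_dist_vertical_line (a : R) : ~ psi1_root a ->
  exists c, 0 < c /\ forall t, ~ is_pole (a, t) ->
    c <= Cmod (digamma (a, t) - digamma (RtoC 1))%C.
Proof.
  intros Hroot.
  destruct (classic (exists k : nat, a = - INR k)) as [[k ->] | Hoff].
  - apply digamma_dist_vertical_line_at_pole.
  - destruct (digamma_dist_vertical_line_off_pole a) as [c [Hc Hb]].
    + intros n Hn. apply Hoff. exists n. lra.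
    + intros Heq. apply Hroot. split; [| exact Heq].
      intros [k Hk]. apply Hoff. exists k. injection Hk. auto.
    + exists c. split; [exact Hc | intros t _; apply Hb].
Qed.

Theorem lemma10p3 :
  (forall sigma : R,
      (forall s : R, psi1_root s -> sigma <> 1 - s) ->
      exists c : R, 0 < c /\
        forall tau : R,
          ~ is_pole (RtoC 1 - (sigma, tau))%C ->
          c <= Cmod (digamma (RtoC 1 - (sigma, tau)) - digamma (RtoC 1))%C)
  /\
  (forall K : R -> Prop, compact K ->
      exists c : R, 0 < c /\
        forall sigma tau : R, K sigma -> 1 <= Rabs tau ->
          c <= Cmod (digamma (RtoC 1 - (sigma, tau)) - digamma (RtoC 1))%C).
Proof.
  split.
  - intros sigma Hsigma.
    assert (Hroot : ~ psi1_root (1 + - sigma)) by (intros H; apply (Hsigma _ H); ring).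
    destruct (digamma_dist_vertical_line _ Hroot) as [c [Hc Hb]].
    exists c. split; [exact Hc |]. intros tau.
    change (RtoC 1 - (sigma, tau))%C with (1 + - sigma, 0 + - tau). apply Hb.
  - intros K HK.
    destruct (compact_P1 K HK) as [m [M HmM]].
    set (A := 1 + Rabs m + Rabs M).
    exists (/ ((1 + A) ^ 2 + 1)). split.
    { apply Rinv_0_lt_compat. pose proof (pow2_ge_0 (1 + A)). lra. }
    intros sigma tau Hsigma Htau.
    change (RtoC 1 - (sigma, tau))%C with (1 + - sigma, 0 + - tau).
    eapply Rle_trans; [| apply digamma_dist_ge_Im].
    apply Series_psi_im_weight_ge_far.
    + specialize (HmM sigma Hsigma). apply Rabs_le. unfold A.
      pose proof (Rabs_pos m). pose proof (Rabs_pos M).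
      pose proof (Rle_abs M). pose proof (Rle_abs (- m)). rewrite Rabs_Ropp in *. lra.
    + rewrite Rplus_0_l, Rabs_Ropp. exact Htau.
Qed.
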